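(* Let $\boldsymbol{R}=[r_{ij}]\in\mathbb{C}^{N\times N}$ be Hermitian. Define $\delta_1=0$ and $\delta_k=\sum_{i=1}^{k-1}|r_{ki}|$ for $k=2,\ldots,N$. Define $a_k=2\delta_k+4\sum_{i=1}^{N-k}\delta_{k+i}$ for $k=1,\ldots,N-1$ and $a_N=2\delta_N$. Let $\overline{\boldsymbol{R}}$ be the matrix obtained from $\boldsymbol{R}$ by replacing its diagonal entries with $a_1,\ldots,a_N$, i.e. $\overline{\boldsymbol{R}}=\boldsymbol{R}-\mathrm{Diag}(\boldsymbol{R})+\mathrm{diag}(a_1,\ldots,a_N)$. For $1\le k\le N$ let $\overline{\boldsymbol{R}}_k$ be the principal submatrix of $\overline{\boldsymbol{R}}$ formed by its first $k$ rows and first $k$ columns, and define $F:A^*\to\mathbb{R}$ by $F(A)=A^H\overline{\boldsymbol{R}}_kA$ for $A=(s_1,\ldots,s_k)\in A^*$ (viewed as a column vector). Then for any $1\le k\le l\le N$ and any $b_1,\ldots,b_l\in\Omega$, with $B=(b_1,\ldots,b_k)$ and $A=(b_1,\ldots,b_l)$, \[ 4\sum_{i=k+1}^{l}\sum_{j=1}^{N-i}\delta_{i+j}\ \le\ F(A)-F(B)\ \le\ 4\sum_{i=k+1}^{l}\Big(\delta_i+\sum_{j=1}^{N-i}\delta_{i+j}\Big). \]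
   Context: $\Omega=\{x\in\mathbb{C}:|x|=1\}$. $A^*=\{(s_1,\ldots,s_k): s_i\in\Omega \text{ for } i=1,\ldots,k,\ k=1,\ldots,N\}$ is the set of all unimodular strings of length between $1$ and $N$. $\mathrm{Diag}(\boldsymbol{R})$ is the diagonal matrix with the same diagonal entries as $\boldsymbol{R}$, and $\mathrm{diag}(a_1,\ldots,a_N)$ is the diagonal matrix with diagonal entries $a_1,\ldots,a_N$. Empty sums are zero. *)

From HB Require Import structures.
From mathcomp Require Import all_boot all_order all_algebra.
Set Implicit Arguments. Unset Strict Implicit. Unset Printing Implicit Defensive.
Import Order.TTheory GRing.Theory Num.Theory.
Local Open Scope ring_scope.

(* Indices are 0-based: the paper's index k (1..N) is our k-1 : 'I_N.
   C is an abstract numClosedFieldType (e.g. algC, or R[i]); ^* is conjugation. *)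

Definition hermitian_mx (C : numClosedFieldType) (N : nat) (R : 'M[C]_N) : Prop :=
  forall i j : 'I_N, R j i = (R i j)^*.

Definition delta (C : numClosedFieldType) (N : nat) (R : 'M[C]_N) (k : 'I_N) : C :=
  \sum_(i < N | (i < k)%N) `|R k i|.

Definition dtail (C : numClosedFieldType) (N : nat) (R : 'M[C]_N) (k : 'I_N) : C :=
  \sum_(i < N | (k < i)%N) delta R i.

(* a_k = 2 delta_k + 4 sum_{i=1}^{N-k} delta_{k+i}; for k = N the sum is empty,
   giving a_N = 2 delta_N *)
Definition adiag (C : numClosedFieldType) (N : nat) (R : 'M[C]_N) (k : 'I_N) : C :=
  2 * delta R k + 4 * dtail R k.

Definition Rbar (C : numClosedFieldType) (N : nat) (R : 'M[C]_N) : 'M[C]_N :=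
  \matrix_(i, j) (if i == j then adiag R i else R i j).

Definition F (C : numClosedFieldType) (N : nat) (R : 'M[C]_N) (k : nat)
    (s : 'I_N -> C) : C :=
  \sum_(i < N | (i < k)%N) \sum_(j < N | (j < k)%N) (s i)^* * Rbar R i j * s j.

From HB Require Import structures.
From mathcomp Require Import all_boot all_order all_algebra.
From mathcomp Require Import ring.
Import Order.TTheory GRing.Theory Num.Theory.
Local Open Scope ring_scope.

(* Appending the unimodular entry b_m to the vector changes F by the new
   diagonal term a_m |b_m|^2 = a_m plus the cross terms
   2 Re (b_m^* sum_(j<m) r_(m j) b_j), whose modulus is at most 2 delta_m.
   Since a_m = 2 delta_m + 4 sum_(i>m) delta_i, every increment lies between
   4 sum_(i>m) delta_i and 4 (delta_m + sum_(i>m) delta_i); summing the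
   increments for m = k, ..., l-1 gives the two bounds. *)

Section OrdinalRanges.
Context {V : nmodType} {N : nat}.

Lemma big_ord_rangeSr (f : 'I_N -> V) {k} (m : 'I_N) : (k <= m)%N ->
  \sum_(i < N | (k <= i < m.+1)%N) f i =
  \sum_(i < N | (k <= i < m)%N) f i + f m.
Proof.
move=> km; rewrite (bigD1 m) /=; last by rewrite km ltnSn.
rewrite addrC; congr (_ + _); apply: eq_bigl => i.
rewrite ltnS -val_eqE /= [(i < m)%N]ltn_neqAle.
by case: (k <= i)%N; rewrite //= andbC.
Qed.

Lemma big_ord_ltnSr (f : 'I_N -> V) (m : 'I_N) :
  \sum_(i < N | (i < m.+1)%N) f i = \sum_(i < N | (i < m)%N) f i + f m.
Proof. exact: big_ord_rangeSr (leq0n m). Qed.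

End OrdinalRanges.

Lemma telescope_bounds {T : numDomainType} {N : nat} (g : nat -> T)
    (lo hi : 'I_N -> T) (k l : nat) :
  (k <= l <= N)%N ->
  (forall i : 'I_N, (k <= i < l)%N -> lo i <= g i.+1 - g i <= hi i) ->
  \sum_(i < N | (k <= i < l)%N) lo i <= g l - g k
    <= \sum_(i < N | (k <= i < l)%N) hi i.
Proof.
case/andP => kl.
have [d ->] : exists d, l = (k + d)%N by exists (l - k)%N; rewrite subnKC.
elim: d => [|d IH] lN hstep.
  by rewrite addn0 subrr !big_pred0 ?lexx // => i; rewrite ltnNge andbN.
rewrite addnS in lN hstep *; have kd : (k + d < N)%N := lN.
rewrite !(big_ord_rangeSr _ (Ordinal kd) (leq_addr _ _)).
have /andP[lo1 hi1] : \sum_(i < N | (k <= i < k + d)%N) lo i <= g (k + d)%N - g k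
    <= \sum_(i < N | (k <= i < k + d)%N) hi i.
  by apply: IH (ltnW lN) _ => i /andP[ki id]; rewrite hstep // ki ltnS ltnW.
have := hstep (Ordinal kd); rewrite /= leq_addr ltnSn => /(_ isT) /andP[lo2 hi2].
have -> : g (k + d).+1 - g k = (g (k + d) - g k) + (g (k + d).+1 - g (k + d)).
  by rewrite [RHS]addrC addrA subrK.
by rewrite !lerD.
Qed.

Lemma addC_conj_bounds {C : numClosedFieldType} (z : C) :
  - (2 * `|z|) <= z + z^* <= 2 * `|z|.
Proof.
have re : z + z^* \is Num.real by rewrite CrealE rmorphD /= conjCK addrC.
rewrite -(real_ler_norml _ re).
apply: le_trans (ler_normD _ _) _.
by rewrite norm_conjC mulr2n mulrDl mul1r.
Qed.

Section Increment.
Variables (C : numClosedFieldType) (N : nat) (R : 'M[C]_N).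
Hypothesis hR : hermitian_mx R.

Lemma Rbar_diag i : Rbar R i i = adiag R i.
Proof. by rewrite mxE eqxx. Qed.

Lemma Rbar_offdiag i j : i != j -> Rbar R i j = R i j.
Proof. by rewrite mxE => /negbTE ->. Qed.

Definition cross_term (b : 'I_N -> C) (m j : 'I_N) : C := (b m)^* * R m j * b j.

Lemma F_succ_sub (m : 'I_N) (b : 'I_N -> C) : `|b m| = 1 ->
  F R m.+1 b - F R m b =
    adiag R m + \sum_(j < N | (j < m)%N) (cross_term b m j + (cross_term b m j)^*).
Proof.
move=> bm1.
have neq_m j : (j < m)%N -> j != m by apply: contraTneq => ->; rewrite ltnn.
rewrite /F big_ord_ltnSr.
under eq_bigr => i _ do rewrite big_ord_ltnSr.
rewrite big_split /= big_ord_ltnSr Rbar_diag big_split /=.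
have col_m : \sum_(i < N | (i < m)%N) (b i)^* * Rbar R i m * b m =
             \sum_(j < N | (j < m)%N) (cross_term b m j)^*.
  apply: eq_bigr => i /neq_m im; rewrite Rbar_offdiag //.
  by rewrite /cross_term !rmorphM /= conjCK hR; ring.
have row_m : \sum_(j < N | (j < m)%N) (b m)^* * Rbar R m j * b j =
             \sum_(j < N | (j < m)%N) cross_term b m j.
  by apply: eq_bigr => j /neq_m jm; rewrite Rbar_offdiag // eq_sym.
have diag_m : (b m)^* * adiag R m * b m = adiag R m.
  by rewrite mulrAC [(b m)^* * _]mulrC -normCK bm1 expr1n mul1r.
rewrite col_m row_m diag_m; ring.
Qed.

Lemma F_succ_sub_bounds (m : 'I_N) (b : 'I_N -> C) :
  (forall i : 'I_N, (i <= m)%N -> `|b i| = 1) ->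
  4 * dtail R m <= F R m.+1 b - F R m b <= 4 * (delta R m + dtail R m).
Proof.
move=> hb; rewrite F_succ_sub ?hb //.
set S := \sum_(j < N | _) _.
have norm_cross (j : 'I_N) : (j < m)%N -> `|cross_term b m j| = `|R m j|.
  by move=> /ltnW jm; rewrite /cross_term !normrM norm_conjC !hb ?mul1r ?mulr1.
have /andP[S_lo S_hi] : - (2 * delta R m) <= S <= 2 * delta R m.
  rewrite /delta mulr_sumr -sumrN; apply/andP; split; apply: ler_sum => j jm;
    by rewrite -(norm_cross j jm); case/andP: (addC_conj_bounds (cross_term b m j)).
rewrite /adiag; apply/andP; split; rewrite -subr_ge0.
  rewrite (_ : _ - _ = S - - (2 * delta R m)) ?subr_ge0 //; ring.
rewrite (_ : _ - _ = 2 * delta R m - S) ?subr_ge0 //; ring.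
Qed.

End Increment.

Theorem lemma1 (C : numClosedFieldType) (N : nat) (R : 'M[C]_N)
  (hR : hermitian_mx R) (k l : nat) (hk : (1 <= k)%N) (hkl : (k <= l)%N)
  (hlN : (l <= N)%N) (b : 'I_N -> C)
  (hb : forall i : 'I_N, (i < l)%N -> `|b i| = 1) :
  4 * \sum_(i < N | (k <= i < l)%N) dtail R i <= F R l b - F R k b /\
  F R l b - F R k b <= 4 * \sum_(i < N | (k <= i < l)%N) (delta R i + dtail R i).
Proof.
rewrite !mulr_sumr; apply/andP; apply: (telescope_bounds (F R ^~ b)).
  by rewrite hkl hlN.
move=> i /andP[_ il]; apply: F_succ_sub_bounds hR _ _ _ => j ji.
exact: hb (leq_ltn_trans ji il).
Qed.
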